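(* For every outcome of the random choices of Algorithm 1 and every $k\in\{0,\dots,T-1\}$, $f_\mu(x_{k+1})\le f_\mu(x_k)$; moreover for every $k\in\{0,\dots,T\}$, $f_\mu(x_k)\le 0$, $Ax_k\le(1+\epsilon)\mathbf 1$ and $\mathbf 1^Tx_k\le(1+\epsilon)\mathrm{OPT}$.
   Context: Standing setup: $A\in\mathbb{R}^{m\times n}_{\ge 0}$ has no zero column and is normalized so that $\min_{i\in[n]}\|A_{:i}\|_\infty=1$, where $A_{:i}$ denotes the $i$-th column. The packing LP is $\max\{\mathbf 1^Tx: x\ge 0,\ Ax\le \mathbf 1\}$ with optimal value $\mathrm{OPT}$. $\epsilon\in(0,1/2]$. $\log$ is the natural logarithm unless written $\log_2$. $\mu=\frac{\epsilon}{4\log(nm/\epsilon)}$, $p_j(x)=\exp\big(\frac{1}{\mu}((Ax)_j-1)\big)$, and $f_\mu(x)=-\mathbf 1^Tx+\mu\sum_{j=1}^m p_j(x)$; $\nabla_i f_\mu(x)=-1+\sum_j A_{ji}p_j(x)$. Algorithm 1 (with any number $T$ of iterations): set $\alpha=\mu/20$, $w=\lceil\log_2(1/\epsilon)\rceil$, $x_0[i]=\frac{1-\epsilon/2}{n\|A_{:i}\|_\infty}$. For $k=0,\dots,T-1$: choose $t_k\in\{0,\dots,w-1\}$ uniformly at random; writing $g_i=\nabla_i f_\mu(x_k)$, define $\xi_k[i]=0$ if $|g_i|\le\epsilon$, $\xi_k[i]=g_i$ if $\epsilon<|g_i|\le 1$, $\xi_k[i]=1$ if $g_i>1$; $\xi^{(t)}_k[i]=\xi_k[i]$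 if $\epsilon2^t<|\xi_k[i]|\le\epsilon2^{t+1}$ and $0$ otherwise; $x_{k+1}[i]=x_k[i]\exp(-\alpha\,\xi^{(t_k)}_k[i])$. *)

From Stdlib Require Import Reals Lra.
Open Scope R_scope.

(* Vectors are functions nat -> R; x : R^n is read on indices 0..n-1;
   the matrix A : R^{m x n} is A j i (row j < m, column i < n). *)

Fixpoint rsum (K : nat) (f : nat -> R) : R :=
  match K with
  | O => 0
  | S K' => rsum K' f + f K'
  end.

(* max_{k < K} f k, with value 0 for K = 0 (only used for K = m >= 1 on
   nonnegative entries, where it is the usual maximum) *)
Fixpoint rmax (K : nat) (f : nat -> R) : R :=
  match K with
  | O => 0
  | S K' => Rmax (rmax K' f) (f K')
  end.

Definition colnorm (m : nat) (A : nat -> nat -> R) (i : nat) : R :=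
  rmax m (fun j => Rabs (A j i)).

Definition Ax (n : nat) (A : nat -> nat -> R) (x : nat -> R) (j : nat) : R :=
  rsum n (fun i => A j i * x i).

Definition sumx (n : nat) (x : nat -> R) : R := rsum n x.

Definition feasible (m n : nat) (A : nat -> nat -> R) (x : nat -> R) : Prop :=
  (forall i, (i < n)%nat -> 0 <= x i) /\
  (forall j, (j < m)%nat -> Ax n A x j <= 1).

Definition is_OPT (m n : nat) (A : nat -> nat -> R) (OPT : R) : Prop :=
  is_lub (fun v => exists x, feasible m n A x /\ v = sumx n x) OPT.

Definition mu (m n : nat) (eps : R) : R :=
  eps / (4 * ln (INR n * INR m / eps)).

Definition pj (m n : nat) (A : nat -> nat -> R) (eps : R) (x : nat -> R) (j : nat) : R :=
  exp ((Ax n A x j - 1) / mu m n eps).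

Definition fmu (m n : nat) (A : nat -> nat -> R) (eps : R) (x : nat -> R) : R :=
  - sumx n x + mu m n eps * rsum m (fun j => pj m n A eps x j).

Definition grad (m n : nat) (A : nat -> nat -> R) (eps : R) (x : nat -> R) (i : nat) : R :=
  -1 + rsum m (fun j => A j i * pj m n A eps x j).

(* xi from g; the case g < -1 never occurs (g >= -1 always) *)
Definition xi_of (eps g : R) : R :=
  if Rle_dec (Rabs g) eps then 0
  else if Rlt_dec 1 g then 1
  else g.

Definition xi_t (eps : R) (t : nat) (v : R) : R :=
  if Rlt_dec (eps * 2 ^ t) (Rabs v) then
    (if Rle_dec (Rabs v) (eps * 2 ^ (S t)) then v else 0)
  else 0.

Definition x0 (m n : nat) (A : nat -> nat -> R) (eps : R) (i : nat) : R :=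
  (1 - eps / 2) / (INR n * colnorm m A i).

(* iterates of Algorithm 1 for the random choices t : nat -> nat *)
Fixpoint iter_x (m n : nat) (A : nat -> nat -> R) (eps : R) (t : nat -> nat)
    (k : nat) : nat -> R :=
  match k with
  | O => x0 m n A eps
  | S k' =>
      let xk := iter_x m n A eps t k' in
      fun i => xk i * exp (- (mu m n eps / 20)
                 * xi_t eps (t k') (xi_of eps (grad m n A eps xk i)))
  end.

(* Write the step of Algorithm 1 as [x_i <- x_i (1 - u_i)] with
   [u_i = 1 - exp (- alpha xi_i)].  While every load [(Ax)_j] is at most 3/2, the
   loads move by at most [mu/2], so [exp y <= 1 + y + 2 y^2] and Cauchy-Schwarz
   bound the change of [f_mu] by [sum_i x_i (3/mu u_i^2 (g_i + 1) - u_i g_i)];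
   each summand is nonpositive because [xi_i] is 0, lies in (0, min (g_i, 1)],
   or equals [g_i < 0].  The loads do stay bounded, since by the choice of [mu]
   already [f_mu(x) <= 0] forces [Ax <= 1 + eps].  As [f_mu(x_0) <= 0], induction
   gives monotonicity and [f_mu(x_k) <= 0], and [x_k / (1 + eps)] is feasible.
   The argument works for every sequence of choices [t_k]. *)

From Stdlib Require Import Reals Lra Lia.
Open Scope R_scope.

Lemma rsum_ext K f g :
  (forall k, (k < K)%nat -> f k = g k) -> rsum K f = rsum K g.
Proof.
  induction K as [|K IH]; intros Hfg; simpl; [reflexivity|].
  rewrite IH by (intros; apply Hfg; lia). rewrite Hfg by lia. reflexivity.
Qed.

Lemma rsum_le K f g :
  (forall k, (k < K)%nat -> f k <= g k) -> rsum K f <= rsum K g.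
Proof.
  induction K as [|K IH]; intros Hfg; simpl; [lra|].
  assert (rsum K f <= rsum K g) by (apply IH; intros; apply Hfg; lia).
  assert (f K <= g K) by (apply Hfg; lia).
  lra.
Qed.

Lemma rsum_plus K f g : rsum K (fun k => f k + g k) = rsum K f + rsum K g.
Proof. induction K as [|K IH]; simpl; [ring|]. rewrite IH. ring. Qed.

Lemma rsum_scal K c f : rsum K (fun k => c * f k) = c * rsum K f.
Proof. induction K as [|K IH]; simpl; [ring|]. rewrite IH. ring. Qed.

Lemma rsum_opp K f : rsum K (fun k => - f k) = - rsum K f.
Proof. induction K as [|K IH]; simpl; [ring|]. rewrite IH. ring. Qed.

Lemma rsum_minus K f g : rsum K (fun k => f k - g k) = rsum K f - rsum K g.
Proof. induction K as [|K IH]; simpl; [ring|]. rewrite IH. ring. Qed.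

Lemma rsum_const K c : rsum K (fun _ => c) = INR K * c.
Proof. induction K as [|K IH]; simpl rsum; [simpl; ring|]. rewrite IH, S_INR. ring. Qed.

Lemma rsum_nonneg K f : (forall k, (k < K)%nat -> 0 <= f k) -> 0 <= rsum K f.
Proof.
  intros Hf. replace 0 with (rsum K (fun _ => 0)) by (rewrite rsum_const; ring).
  now apply rsum_le.
Qed.

Lemma rsum_ge_term K f k :
  (forall k, (k < K)%nat -> 0 <= f k) -> (k < K)%nat -> f k <= rsum K f.
Proof.
  induction K as [|K IH]; intros Hf Hk; simpl; [lia|].
  assert (0 <= rsum K f) by (apply rsum_nonneg; intros; apply Hf; lia).
  destruct (Nat.eq_dec k K) as [->|Hne]; [lra|].
  assert (f k <= rsum K f) by (apply IH; [intros; apply Hf|]; lia).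
  assert (0 <= f K) by (apply Hf; lia).
  lra.
Qed.

Lemma rsum_swap K L F :
  rsum K (fun k => rsum L (fun l => F k l)) = rsum L (fun l => rsum K (fun k => F k l)).
Proof.
  induction K as [|K IH]; simpl.
  - rewrite rsum_const. ring.
  - rewrite IH, <- rsum_plus. reflexivity.
Qed.

Lemma rmax_ge K f k : (k < K)%nat -> f k <= rmax K f.
Proof.
  induction K as [|K IH]; intros Hk; simpl; [lia|].
  destruct (Nat.eq_dec k K) as [->|Hne]; [apply Rmax_r|].
  eapply Rle_trans; [apply IH; lia | apply Rmax_l].
Qed.

Lemma rmax_le_rsum K f : (forall k, (k < K)%nat -> 0 <= f k) -> rmax K f <= rsum K f.
Proof.
  induction K as [|K IH]; intros Hf; simpl; [lra|].
  assert (rmax K f <= rsum K f) by (apply IH; intros; apply Hf; lia).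
  assert (0 <= f K) by (apply Hf; lia).
  assert (0 <= rsum K f) by (apply rsum_nonneg; intros; apply Hf; lia).
  apply Rmax_lub; lra.
Qed.

(* Expand [sum_k a_k (v_k - M/C)^2 >= 0]. *)
Lemma rsum_cauchy_schwarz K a v C :
  0 < C -> (forall k, (k < K)%nat -> 0 <= a k) -> rsum K a <= C ->
  (rsum K (fun k => a k * v k)) ^ 2 <= C * rsum K (fun k => a k * v k ^ 2).
Proof.
  intros HC Ha HaC.
  set (M := rsum K (fun k => a k * v k)). set (lam := M / C).
  assert (Hsq : 0 <= rsum K (fun k => a k * (v k - lam) ^ 2)).
  { apply rsum_nonneg. intros k Hk. apply Rmult_le_pos; [auto | apply pow2_ge_0]. }
  assert (Hexp : rsum K (fun k => a k * (v k - lam) ^ 2)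
      = rsum K (fun k => a k * v k ^ 2) - 2 * lam * M + lam ^ 2 * rsum K a).
  { unfold M. rewrite <- !rsum_scal, <- rsum_minus, <- rsum_plus.
    apply rsum_ext. intros. ring. }
  assert (0 <= rsum K a) by (apply rsum_nonneg; auto).
  assert (lam ^ 2 * rsum K a <= lam ^ 2 * C) by (apply Rmult_le_compat_l; nra).
  assert (HM : M = lam * C) by (unfold lam; field; lra).
  rewrite HM in *. nra.
Qed.

Lemma exp_le_quadratic y : y <= 1 / 2 -> exp y <= 1 + y + 2 * y ^ 2.
Proof.
  intros Hy.
  assert (Hinv : exp (- y) * exp y = 1) by (rewrite <- exp_plus, Rplus_opp_l; apply exp_0).
  pose proof (exp_ineq1_le (- y)). pose proof (exp_pos y).
  assert (exp y * (1 - y) <= 1) by nra.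
  assert (0 <= y ^ 2 * (1 - 2 * y)) by (apply Rmult_le_pos; [apply pow2_ge_0 | lra]).
  nra.
Qed.

Lemma exp_le_one y : y <= 0 -> exp y <= 1.
Proof.
  intros Hy. rewrite <- exp_0.
  destruct (Rle_lt_or_eq_dec _ _ Hy) as [Hlt| ->]; [apply Rlt_le, exp_increasing|]; lra.
Qed.

Lemma one_sub_exp_opp_bounds a :
  - (1 / 2) <= a <= 1 / 2 ->
  0 <= (1 - exp (- a)) * a /\ (1 - exp (- a)) ^ 2 <= 2 * (1 - exp (- a)) * a.
Proof.
  intros Ha.
  pose proof (exp_ineq1_le (- a)).
  destruct (Rle_lt_dec 0 a) as [Hpos|Hneg].
  - assert (exp (- a) <= 1) by (apply exp_le_one; lra).
    split; nra.
  - assert (1 <= exp (- a)) by lra.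
    assert (exp (- a) <= 1 + - a + 2 * (- a) ^ 2) by (apply exp_le_quadratic; lra).
    assert (2 * a <= 1 - exp (- a) <= 0) by nra.
    split; nra.
Qed.

Definition admissible_step (s g : R) : Prop :=
  s = 0 \/ (0 < s <= 1 /\ s <= g) \/ (s < 0 /\ s = g).

Lemma xi_t_admissible eps t g :
  0 < eps -> admissible_step (xi_t eps t (xi_of eps g)) g.
Proof.
  intros Heps. unfold admissible_step, xi_t, xi_of.
  destruct (Rle_dec (Rabs g) eps) as [Hsmall|Hbig].
  - repeat (destruct Rlt_dec || destruct Rle_dec); auto.
  - destruct (Rlt_dec 1 g) as [Hg1|Hg1];
      repeat (destruct Rlt_dec || destruct Rle_dec); auto.
    + right; left; lra.
    + destruct (Rtotal_order g 0) as [|[|]]; [right; right | left | right; left]; lra.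
Qed.

Lemma admissible_decrement mu s g :
  0 < mu <= 1 -> -1 <= g -> admissible_step s g ->
  - (mu / 10) <= 1 - exp (- (mu / 20) * s) /\
  3 / mu * (1 - exp (- (mu / 20) * s)) ^ 2 * (g + 1) <= (1 - exp (- (mu / 20) * s)) * g.
Proof.
  intros Hmu Hg Hs.
  assert (Hs1 : -1 <= s <= 1) by (destruct Hs as [|[|]]; lra).
  set (a := mu / 20 * s).
  replace (- (mu / 20) * s) with (- a) by (unfold a; ring).
  set (u := 1 - exp (- a)).
  destruct (one_sub_exp_opp_bounds a) as [Hua Hu2].
  { unfold a. split; nra. }
  fold u in Hua, Hu2.
  assert (Hquad : 3 / mu * u ^ 2 * (g + 1) <= 3 / 10 * u * s * (g + 1)).
  { replace (3 / 10 * u * s * (g + 1)) with (3 / mu * (2 * u * a) * (g + 1))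
      by (unfold a; field; lra).
    apply Rmult_le_compat_r; [lra|]. apply Rmult_le_compat_l; [|exact Hu2].
    apply Rlt_le, Rdiv_lt_0_compat; lra. }
  destruct Hs as [Hs0|[[Hsp Hsg]|[Hsn Hsg]]].
  - assert (Hu0 : u = 0) by (unfold u, a; rewrite Hs0, Rmult_0_r, Ropp_0, exp_0; ring).
    rewrite Hu0 in *. lra.
  - assert (0 < a) by (unfold a; nra).
    assert (0 <= u) by nra.
    assert (0 <= g - 3 / 10 * s * (g + 1)) by nra.
    split; [lra|]. nra.
  - subst s. assert (a < 0) by (unfold a; nra).
    assert (u <= 0) by nra.
    assert (- (mu / 10) <= 2 * a) by (unfold a; nra).
    assert (g - 3 / 10 * g * (g + 1) <= 0) by nra.
    split; nra.
Qed.

Lemma Ax_nonneg n A c j :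
  (forall i, (i < n)%nat -> 0 <= A j i) -> (forall i, (i < n)%nat -> 0 <= c i) ->
  0 <= Ax n A c j.
Proof. intros HA Hc. apply rsum_nonneg. intros i Hi. apply Rmult_le_pos; auto. Qed.

Lemma rsum_mul_Ax m n A p c :
  rsum m (fun j => p j * Ax n A c j) = rsum n (fun i => c i * rsum m (fun j => A j i * p j)).
Proof.
  unfold Ax.
  rewrite (rsum_ext m _ (fun j => rsum n (fun i => p j * (A j i * c i))))
    by (intros; symmetry; apply rsum_scal).
  rewrite rsum_swap. apply rsum_ext. intros i _.
  rewrite <- rsum_scal. apply rsum_ext. intros. ring.
Qed.

Lemma pj_pos m n A eps x j : 0 < pj m n A eps x j.
Proof. apply exp_pos. Qed.

Lemma grad_ge_m1 m n A eps x i :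
  (forall j, (j < m)%nat -> 0 <= A j i) -> -1 <= grad m n A eps x i.
Proof.
  intros HA. unfold grad.
  assert (0 <= rsum m (fun j => A j i * pj m n A eps x j)).
  { apply rsum_nonneg. intros j Hj. apply Rmult_le_pos; [auto | apply Rlt_le, pj_pos]. }
  lra.
Qed.

Lemma fmu_ext m n A eps x y :
  (forall i, (i < n)%nat -> x i = y i) -> fmu m n A eps x = fmu m n A eps y.
Proof.
  intros Hxy.
  assert (HAx : forall j, Ax n A x j = Ax n A y j)
    by (intros; apply rsum_ext; intros; rewrite Hxy by assumption; reflexivity).
  unfold fmu, sumx, pj. rewrite (rsum_ext n x y Hxy).
  do 2 f_equal. apply rsum_ext. intros. rewrite HAx. reflexivity.
Qed.

Section Descent.
Variables (m n : nat) (A : nat -> nat -> R) (eps : R).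
Hypothesis hmu : 0 < mu m n eps <= 1.
Hypothesis hA : forall j i, (j < m)%nat -> (i < n)%nat -> 0 <= A j i.

Lemma pj_rescale_le x u j :
  (j < m)%nat -> (forall i, (i < n)%nat -> 0 <= x i) -> Ax n A x j <= 3 / 2 ->
  (forall i, (i < n)%nat -> - (mu m n eps / 10) <= u i) ->
  let P := pj m n A eps x j in
  let D := Ax n A (fun i => x i * u i) j in
  pj m n A eps (fun i => x i * (1 - u i)) j
    <= P - / mu m n eps * (P * D) + 2 / mu m n eps ^ 2 * (P * D ^ 2).
Proof.
  intros Hj Hx HAx Hu P D.
  set (mu0 := mu m n eps) in *.
  assert (HAx' : Ax n A (fun i => x i * (1 - u i)) j = Ax n A x j - D).
  { unfold D, Ax. rewrite <- rsum_minus. apply rsum_ext. intros. ring. }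
  assert (Hexp : pj m n A eps (fun i => x i * (1 - u i)) j = P * exp (- D / mu0)).
  { unfold P, pj. fold mu0. rewrite HAx', <- exp_plus. f_equal. field. lra. }
  assert (HD : - D <= mu0 / 10 * Ax n A x j).
  { unfold D, Ax. rewrite <- rsum_opp, <- rsum_scal.
    apply rsum_le. intros i Hi.
    assert (0 <= A j i * x i) by (apply Rmult_le_pos; auto).
    specialize (Hu i Hi). nra. }
  assert (0 <= Ax n A x j) by (apply Ax_nonneg; auto).
  assert (Hy : - D / mu0 <= 1 / 2).
  { apply Rmult_le_reg_r with mu0; [lra|].
    unfold Rdiv. rewrite Rmult_assoc, Rinv_l by lra. nra. }
  rewrite Hexp.
  apply Rle_trans with (P * (1 + - D / mu0 + 2 * (- D / mu0) ^ 2)).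
  - apply Rmult_le_compat_l; [apply Rlt_le, pj_pos | now apply exp_le_quadratic].
  - right. field. lra.
Qed.

Lemma Ax_rescale_sq_le x u j :
  (j < m)%nat -> (forall i, (i < n)%nat -> 0 <= x i) -> Ax n A x j <= 3 / 2 ->
  (Ax n A (fun i => x i * u i) j) ^ 2 <= 3 / 2 * Ax n A (fun i => x i * u i ^ 2) j.
Proof.
  intros Hj Hx HAx. unfold Ax.
  rewrite (rsum_ext n (fun i => A j i * (x i * u i)) (fun i => (A j i * x i) * u i))
    by (intros; ring).
  rewrite (rsum_ext n (fun i => A j i * (x i * u i ^ 2)) (fun i => (A j i * x i) * u i ^ 2))
    by (intros; ring).
  apply rsum_cauchy_schwarz; [lra | intros; apply Rmult_le_pos; auto | exact HAx].
Qed.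

Lemma mu_rsum_pj_rescale_le x u :
  (forall i, (i < n)%nat -> 0 <= x i) ->
  (forall j, (j < m)%nat -> Ax n A x j <= 3 / 2) ->
  (forall i, (i < n)%nat -> - (mu m n eps / 10) <= u i) ->
  let g := grad m n A eps x in
  mu m n eps * rsum m (pj m n A eps (fun i => x i * (1 - u i)))
    <= mu m n eps * rsum m (pj m n A eps x) - rsum n (fun i => x i * u i * (g i + 1))
       + 3 / mu m n eps * rsum n (fun i => x i * u i ^ 2 * (g i + 1)).
Proof.
  intros Hx HAx Hu g.
  set (mu0 := mu m n eps) in *.
  set (P := pj m n A eps x).
  set (D := Ax n A (fun i => x i * u i)).
  assert (Hgrad : forall i, g i + 1 = rsum m (fun j => A j i * P j))
    by (intros; unfold g, grad, P; ring).
  assert (Hpj : rsum m (pj m n A eps (fun i => x i * (1 - u i)))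
      <= rsum m P - / mu0 * rsum m (fun j => P j * D j)
         + 2 / mu0 ^ 2 * rsum m (fun j => P j * D j ^ 2)).
  { rewrite <- !rsum_scal, <- rsum_minus, <- rsum_plus. apply rsum_le. intros j Hj.
    apply pj_rescale_le; auto. }
  assert (Hlin : rsum m (fun j => P j * D j) = rsum n (fun i => x i * u i * (g i + 1))).
  { unfold D. rewrite rsum_mul_Ax. apply rsum_ext. intros. rewrite Hgrad. ring. }
  assert (Hquad : rsum m (fun j => P j * D j ^ 2)
      <= 3 / 2 * rsum n (fun i => x i * u i ^ 2 * (g i + 1))).
  { apply Rle_trans with (3 / 2 * rsum m (fun j => P j * Ax n A (fun i => x i * u i ^ 2) j)).
    - rewrite <- rsum_scal. apply rsum_le. intros j Hj.
      assert (0 < P j) by apply pj_pos.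
      assert (D j ^ 2 <= 3 / 2 * Ax n A (fun i => x i * u i ^ 2) j)
        by (apply Ax_rescale_sq_le; auto).
      nra.
    - rewrite rsum_mul_Ax. right. f_equal. apply rsum_ext. intros. rewrite Hgrad. ring. }
  apply Rle_trans with (mu0 * (rsum m P - / mu0 * rsum m (fun j => P j * D j)
      + 2 / mu0 ^ 2 * rsum m (fun j => P j * D j ^ 2))).
  - apply Rmult_le_compat_l; lra.
  - rewrite Hlin.
    replace (mu0 * (rsum m P - / mu0 * rsum n (fun i => x i * u i * (g i + 1))
        + 2 / mu0 ^ 2 * rsum m (fun j => P j * D j ^ 2)))
      with (mu0 * rsum m P - rsum n (fun i => x i * u i * (g i + 1))
        + 2 / mu0 * rsum m (fun j => P j * D j ^ 2)) by (field; lra).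
    assert (2 / mu0 * rsum m (fun j => P j * D j ^ 2)
        <= 3 / mu0 * rsum n (fun i => x i * u i ^ 2 * (g i + 1))).
    { replace (3 / mu0) with (2 / mu0 * (3 / 2)) by (field; lra). rewrite Rmult_assoc.
      apply Rmult_le_compat_l; [apply Rlt_le, Rdiv_lt_0_compat|]; lra. }
    lra.
Qed.

Lemma fmu_rescale_le x u :
  (forall i, (i < n)%nat -> 0 <= x i) ->
  (forall j, (j < m)%nat -> Ax n A x j <= 3 / 2) ->
  (forall i, (i < n)%nat -> - (mu m n eps / 10) <= u i /\
     3 / mu m n eps * u i ^ 2 * (grad m n A eps x i + 1) <= u i * grad m n A eps x i) ->
  fmu m n A eps (fun i => x i * (1 - u i)) <= fmu m n A eps x.
Proof.
  intros Hx HAx Hu.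
  pose proof (mu_rsum_pj_rescale_le x u Hx HAx (fun i Hi => proj1 (Hu i Hi))) as Hpj.
  set (mu0 := mu m n eps) in *. set (g := grad m n A eps x) in *.
  assert (Hsumx : sumx n (fun i => x i * (1 - u i)) = sumx n x - rsum n (fun i => x i * u i)).
  { unfold sumx. rewrite <- rsum_minus. apply rsum_ext. intros. ring. }
  assert (Hcoord : rsum n (fun i => x i * u i) - rsum n (fun i => x i * u i * (g i + 1))
      + 3 / mu0 * rsum n (fun i => x i * u i ^ 2 * (g i + 1)) <= 0).
  { rewrite <- rsum_scal, <- rsum_minus, <- rsum_plus.
    replace 0 with (rsum n (fun _ => 0)) by (rewrite rsum_const; ring).
    apply rsum_le. intros i Hi. destruct (Hu i Hi) as [_ Hui]. fold mu0 g in Hui.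
    specialize (Hx i Hi).
    replace (x i * u i - x i * u i * (g i + 1) + 3 / mu0 * (x i * u i ^ 2 * (g i + 1)))
      with (x i * (3 / mu0 * u i ^ 2 * (g i + 1) - u i * g i)) by ring.
    nra. }
  unfold fmu. fold mu0. rewrite Hsumx.
  change (rsum m (fun j => pj m n A eps x j)) with (rsum m (pj m n A eps x)).
  change (rsum m (fun j => pj m n A eps (fun i => x i * (1 - u i)) j))
    with (rsum m (pj m n A eps (fun i => x i * (1 - u i)))).
  lra.
Qed.

End Descent.

Lemma colnorm_ge m A i j : (j < m)%nat -> 0 <= A j i -> A j i <= colnorm m A i.
Proof.
  intros Hj HAji. unfold colnorm. rewrite <- (Rabs_pos_eq (A j i)) at 1 by exact HAji.
  exact (rmax_ge m (fun j => Rabs (A j i)) j Hj).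
Qed.

Lemma colnorm_le_rsum m A i :
  (forall j, (j < m)%nat -> 0 <= A j i) -> colnorm m A i <= rsum m (fun j => A j i).
Proof.
  intros HA. unfold colnorm. apply Rle_trans with (rsum m (fun j => Rabs (A j i))).
  - apply rmax_le_rsum. intros. apply Rabs_pos.
  - right. apply rsum_ext. intros. apply Rabs_pos_eq. auto.
Qed.

Lemma sumx_le_rsum_Ax m n A x :
  (forall j i, (j < m)%nat -> (i < n)%nat -> 0 <= A j i) ->
  (forall i, (i < n)%nat -> 1 <= colnorm m A i) ->
  (forall i, (i < n)%nat -> 0 <= x i) ->
  sumx n x <= rsum m (Ax n A x).
Proof.
  intros HA Hcol Hx.
  rewrite (rsum_ext m _ (fun j => 1 * Ax n A x j)) by (intros; ring).
  rewrite rsum_mul_Ax. apply rsum_le. intros i Hi.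
  assert (1 <= rsum m (fun j => A j i * 1)).
  { rewrite (rsum_ext m _ (fun j => A j i)) by (intros; ring).
    apply Rle_trans with (colnorm m A i); [auto | apply colnorm_le_rsum; auto]. }
  specialize (Hx i Hi). nra.
Qed.

(* Rescaling [x] by [1/c] makes it feasible. *)
Lemma sumx_le_of_Ax_le m n A OPT c x :
  is_OPT m n A OPT -> 0 < c ->
  (forall i, (i < n)%nat -> 0 <= x i) -> (forall j, (j < m)%nat -> Ax n A x j <= c) ->
  sumx n x <= c * OPT.
Proof.
  intros [Hub _] Hc Hx HAx.
  assert (Hfeas : feasible m n A (fun i => / c * x i)).
  { split.
    - intros i Hi. apply Rmult_le_pos; [apply Rlt_le, Rinv_0_lt_compat | auto]; lra.
    - intros j Hj. unfold Ax.
      rewrite (rsum_ext n _ (fun i => / c * (A j i * x i))) by (intros; ring).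
      rewrite rsum_scal. fold (Ax n A x j).
      apply Rmult_le_reg_l with c; [lra|].
      rewrite <- Rmult_assoc, Rinv_r, Rmult_1_l, Rmult_1_r by lra. auto. }
  assert (Hopt : sumx n (fun i => / c * x i) <= OPT) by (apply Hub; eauto).
  unfold sumx in Hopt. rewrite rsum_scal in Hopt.
  apply Rmult_le_reg_l with (/ c); [apply Rinv_0_lt_compat; lra|].
  rewrite <- Rmult_assoc, Rinv_l, Rmult_1_l by lra. exact Hopt.
Qed.

Section Normalized.
Variables (m n : nat) (A : nat -> nat -> R) (eps : R).
Hypothesis hA : forall j i, (j < m)%nat -> (i < n)%nat -> 0 <= A j i.
Hypothesis hcol : forall i, (i < n)%nat -> 1 <= colnorm m A i.
Hypothesis heps : 0 < eps <= 1 / 2.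
Hypothesis hn : (1 <= n)%nat.
Hypothesis hm : (1 <= m)%nat.

Let Z := INR n * INR m / eps.

Lemma INR_n_m_ge1 : 1 <= INR n /\ 1 <= INR m.
Proof. split; apply (le_INR 1); assumption. Qed.

Lemma Z_ge2 : 2 <= Z.
Proof.
  destruct INR_n_m_ge1. unfold Z. apply Rmult_le_reg_r with eps; [lra|].
  unfold Rdiv. rewrite Rmult_assoc, Rinv_l by lra. nra.
Qed.

Lemma ln_Z_bounds : 1 / 2 < ln Z <= Z - 1.
Proof.
  pose proof Z_ge2. pose proof ln_lt_2. split.
  - destruct (Rle_lt_or_eq_dec 2 Z) as [H2|<-]; [assumption| |lra].
    pose proof (ln_increasing 2 Z ltac:(lra) H2). lra.
  - pose proof (exp_ineq1_le (ln Z)). rewrite exp_ln in * by lra. lra.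
Qed.

Lemma mu_bounds : 0 < mu m n eps <= 1.
Proof.
  pose proof ln_Z_bounds. unfold mu. fold Z. split.
  - apply Rdiv_lt_0_compat; lra.
  - apply Rmult_le_reg_r with (4 * ln Z); [lra|].
    unfold Rdiv. rewrite Rmult_assoc, Rinv_l by lra. lra.
Qed.

Lemma exp_half_eps_div_mu : exp (eps / 2 / mu m n eps) = Z ^ 2.
Proof.
  pose proof ln_Z_bounds. pose proof Z_ge2. unfold mu. fold Z.
  replace (eps / 2 / (eps / (4 * ln Z))) with (ln Z + ln Z) by (field; lra).
  rewrite exp_plus, exp_ln by lra. ring.
Qed.

Lemma mu_mul_exp_gt y : eps < y -> y + INR m < mu m n eps * exp (y / mu m n eps).
Proof.
  intros Hy. pose proof mu_bounds. pose proof Z_ge2. pose proof ln_Z_bounds.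
  destruct INR_n_m_ge1.
  set (mu0 := mu m n eps) in *. set (d := y - eps).
  assert (Hsplit : exp (y / mu0) = exp (eps / 2 / mu0) ^ 2 * exp (d / mu0)).
  { simpl. rewrite Rmult_1_r, <- !exp_plus. f_equal. unfold d. field. lra. }
  unfold mu0 in Hsplit. rewrite exp_half_eps_div_mu in Hsplit. fold mu0 in Hsplit.
  assert (Hd : 1 + d / mu0 <= exp (d / mu0)) by apply exp_ineq1_le.
  assert (HZ4 : INR m + eps <= Z ^ 4 * mu0).
  { assert (HZ3 : 6 * (Z - 1) <= Z ^ 3) by nra.
    assert (HZe : Z * eps = INR n * INR m) by (unfold Z; field; lra).
    replace (Z ^ 4 * mu0) with (Z ^ 3 * (INR n * INR m) / (4 * ln Z))
      by (unfold mu0, mu; fold Z; rewrite <- HZe; field; lra).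
    apply Rmult_le_reg_r with (4 * ln Z); [lra|].
    unfold Rdiv. rewrite Rmult_assoc, Rinv_l, Rmult_1_r by lra.
    assert ((INR m + eps) * (4 * ln Z) <= 6 * (Z - 1) * INR m) by nra.
    assert (0 <= Z ^ 3) by (apply pow_le; lra).
    assert (6 * (Z - 1) * INR m <= Z ^ 3 * INR m) by nra.
    assert (Z ^ 3 * INR m <= Z ^ 3 * (INR n * INR m))
      by (apply Rmult_le_compat_l; nra).
    lra. }
  assert (Hmu_d : mu0 * (1 + d / mu0) = mu0 + d) by (field; lra).
  assert (0 < d) by (unfold d; lra).
  rewrite Hsplit, <- pow_mult. simpl (2 * 2)%nat.
  assert (4 <= Z ^ 2) by nra.
  assert (16 <= Z ^ 4) by (replace (Z ^ 4) with (Z ^ 2 * Z ^ 2) by ring; nra).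
  assert (mu0 + d <= mu0 * exp (d / mu0)) by (rewrite <- Hmu_d; apply Rmult_le_compat_l; lra).
  unfold d in *. nra.
Qed.

(* Each term [mu p_j - (Ax)_j + 1] is nonnegative ([exp y >= 1 + y]) and their
   sum is at most [f_mu(x) + m], so one overloaded row already forces
   [f_mu(x) > 0]. *)
Lemma Ax_le_of_fmu_nonpos x :
  (forall i, (i < n)%nat -> 0 <= x i) -> fmu m n A eps x <= 0 ->
  forall j, (j < m)%nat -> Ax n A x j <= 1 + eps.
Proof.
  intros Hx Hf j0 Hj0.
  destruct (Rle_lt_dec (Ax n A x j0) (1 + eps)) as [|Hover]; [assumption|exfalso].
  pose proof mu_bounds. set (mu0 := mu m n eps) in *.
  set (slack := fun j => mu0 * pj m n A eps x j - Ax n A x j + 1).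
  assert (Hslack : forall j, 0 <= slack j).
  { intros j. unfold slack, pj. fold mu0.
    pose proof (exp_ineq1_le ((Ax n A x j - 1) / mu0)).
    assert (mu0 * (1 + (Ax n A x j - 1) / mu0) = mu0 + Ax n A x j - 1) by (field; lra).
    nra. }
  assert (Htotal : rsum m slack <= INR m).
  { assert (rsum m slack = fmu m n A eps x + sumx n x - rsum m (Ax n A x) + INR m).
    { unfold slack, fmu. fold mu0. rewrite <- (Rmult_1_r (INR m)), <- rsum_const.
      change (rsum m (fun j => pj m n A eps x j)) with (rsum m (pj m n A eps x)).
      rewrite (rsum_ext m _ (fun j => mu0 * pj m n A eps x j + (1 - Ax n A x j)))
        by (intros; ring).
      rewrite rsum_plus, rsum_minus, rsum_scal. ring. }
    pose proof (sumx_le_rsum_Ax m n A x hA hcol Hx). lra. }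
  assert (Hslack0 : slack j0 <= INR m) by (eapply Rle_trans; [apply rsum_ge_term|]; eauto).
  pose proof (mu_mul_exp_gt (Ax n A x j0 - 1) ltac:(lra)) as Hgt. fold mu0 in Hgt.
  unfold slack, pj in Hslack0. fold mu0 in Hslack0. lra.
Qed.

Lemma x0_pos i : (i < n)%nat -> 0 < x0 m n A eps i.
Proof.
  intros Hi. destruct INR_n_m_ge1. specialize (hcol i Hi).
  apply Rdiv_lt_0_compat; [lra | nra].
Qed.

Lemma Ax_x0_le j : (j < m)%nat -> Ax n A (x0 m n A eps) j <= 1 - eps / 2.
Proof.
  intros Hj. destruct INR_n_m_ge1.
  apply Rle_trans with (rsum n (fun _ => (1 - eps / 2) / INR n)).
  - apply rsum_le. intros i Hi. unfold x0.
    pose proof (hcol i Hi). pose proof (hA j i Hj Hi).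
    pose proof (colnorm_ge m A i j Hj (hA j i Hj Hi)).
    replace (A j i * ((1 - eps / 2) / (INR n * colnorm m A i)))
      with (A j i / colnorm m A i * ((1 - eps / 2) / INR n)) by (field; lra).
    rewrite <- (Rmult_1_l ((1 - eps / 2) / INR n)) at 2.
    apply Rmult_le_compat_r; [apply Rlt_le, Rdiv_lt_0_compat; lra|].
    apply Rmult_le_reg_r with (colnorm m A i); [lra|].
    unfold Rdiv. rewrite Rmult_assoc, Rinv_l by lra. lra.
  - rewrite rsum_const. right. field. lra.
Qed.

(* The barrier terms at [x0] are at most [(eps/(nm))^2] each, while a column of
   norm 1 alone contributes [(1 - eps/2)/n] to [1^T x0]. *)
Lemma fmu_x0_nonpos i0 :
  (i0 < n)%nat -> colnorm m A i0 = 1 -> fmu m n A eps (x0 m n A eps) <= 0.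
Proof.
  intros Hi0 Hc.
  pose proof mu_bounds. pose proof Z_ge2. destruct INR_n_m_ge1.
  set (mu0 := mu m n eps) in *.
  assert (Hpj : forall j, (j < m)%nat -> pj m n A eps (x0 m n A eps) j * Z ^ 2 <= 1).
  { intros j Hj. unfold mu0 in *. rewrite <- exp_half_eps_div_mu. unfold pj.
    rewrite <- exp_plus. apply exp_le_one.
    pose proof (Ax_x0_le j Hj).
    replace ((Ax n A (x0 m n A eps) j - 1) / mu m n eps + eps / 2 / mu m n eps)
      with ((Ax n A (x0 m n A eps) j - 1 + eps / 2) * / mu m n eps) by (field; lra).
    assert (0 < / mu m n eps) by (apply Rinv_0_lt_compat; lra). nra. }
  assert (Hbarrier : mu0 * rsum m (pj m n A eps (x0 m n A eps)) * Z ^ 2 <= INR m).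
  { rewrite Rmult_assoc, <- (Rmult_1_r (INR m)), <- rsum_const.
    rewrite (Rmult_comm (rsum _ _)), <- rsum_scal, <- rsum_scal.
    apply rsum_le. intros j Hj. specialize (Hpj j Hj). nra. }
  assert (Hsum : x0 m n A eps i0 <= sumx n (x0 m n A eps)).
  { apply rsum_ge_term; [intros; apply Rlt_le, x0_pos|]; assumption. }
  assert (Hx0 : x0 m n A eps i0 * INR n = 1 - eps / 2) by (unfold x0; rewrite Hc; field; lra).
  assert (HmZ : INR m / Z ^ 2 * INR n = eps ^ 2 / (INR n * INR m)) by (unfold Z; field; lra).
  assert (1 <= INR n * INR m) by nra.
  assert (eps ^ 2 / (INR n * INR m) <= eps ^ 2).
  { apply Rmult_le_reg_r with (INR n * INR m); [lra|].
    unfold Rdiv. rewrite Rmult_assoc, Rinv_l, Rmult_1_r by lra.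
    rewrite <- (Rmult_1_r (eps ^ 2)) at 1. apply Rmult_le_compat_l; [apply pow2_ge_0 | lra]. }
  assert (Hcmp : INR m / Z ^ 2 <= x0 m n A eps i0) by nra.
  assert (mu0 * rsum m (pj m n A eps (x0 m n A eps)) <= INR m / Z ^ 2).
  { apply Rmult_le_reg_r with (Z ^ 2); [nra|].
    replace (INR m / Z ^ 2 * Z ^ 2) with (INR m) by (field; nra). lra. }
  unfold fmu. fold mu0.
  change (rsum m (fun j => pj m n A eps (x0 m n A eps) j))
    with (rsum m (pj m n A eps (x0 m n A eps))).
  lra.
Qed.

Lemma iter_x_pos t k i : (i < n)%nat -> 0 < iter_x m n A eps t k i.
Proof.
  intros Hi. induction k as [|k IH]; simpl.
  - now apply x0_pos.
  - apply Rmult_lt_0_compat; [exact IH | apply exp_pos].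
Qed.

Lemma fmu_iter_x_succ_le t k :
  fmu m n A eps (iter_x m n A eps t k) <= 0 ->
  fmu m n A eps (iter_x m n A eps t (S k)) <= fmu m n A eps (iter_x m n A eps t k).
Proof.
  intros Hf. pose proof mu_bounds.
  set (x := iter_x m n A eps t k) in *.
  assert (Hx : forall i, (i < n)%nat -> 0 <= x i) by (intros; apply Rlt_le, iter_x_pos; auto).
  set (s := fun i => xi_t eps (t k) (xi_of eps (grad m n A eps x i))).
  rewrite (fmu_ext m n A eps _ (fun i => x i * (1 - (1 - exp (- (mu m n eps / 20) * s i)))))
    by (intros; unfold s, x; simpl; ring).
  apply fmu_rescale_le; auto.
  - intros j Hj. pose proof (Ax_le_of_fmu_nonpos x Hx Hf j Hj). lra.
  - intros i Hi. apply admissible_decrement; auto.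
    + apply grad_ge_m1. intros. auto.
    + apply xi_t_admissible. lra.
Qed.

Lemma fmu_iter_x_nonpos t i0 :
  (i0 < n)%nat -> colnorm m A i0 = 1 ->
  forall k, fmu m n A eps (iter_x m n A eps t k) <= 0.
Proof.
  intros Hi0 Hc. induction k as [|k IH].
  - exact (fmu_x0_nonpos i0 Hi0 Hc).
  - eapply Rle_trans; [apply fmu_iter_x_succ_le|]; exact IH.
Qed.

End Normalized.

Theorem claim3p5 (m n : nat) (A : nat -> nat -> R) (OPT eps : R) (w T : nat)
  (t : nat -> nat)
  (hA_nonneg : forall j i, (j < m)%nat -> (i < n)%nat -> 0 <= A j i)
  (hA_nozero : forall i, (i < n)%nat -> exists j, (j < m)%nat /\ A j i <> 0)
  (hA_norm1 : forall i, (i < n)%nat -> 1 <= colnorm m A i)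
  (hA_norm2 : exists i, (i < n)%nat /\ colnorm m A i = 1)
  (hOPT : is_OPT m n A OPT)
  (heps : 0 < eps <= 1 / 2)
  (hw : INR w - 1 < ln (1 / eps) / ln 2 <= INR w)
  (ht : forall k, (k < T)%nat -> (t k < w)%nat) :
  (forall k, (k < T)%nat ->
     fmu m n A eps (iter_x m n A eps t (S k)) <= fmu m n A eps (iter_x m n A eps t k)) /\
  (forall k, (k <= T)%nat ->
     fmu m n A eps (iter_x m n A eps t k) <= 0 /\
     (forall j, (j < m)%nat -> Ax n A (iter_x m n A eps t k) j <= 1 + eps) /\
     sumx n (iter_x m n A eps t k) <= (1 + eps) * OPT).
Proof.
  destruct hA_norm2 as [i0 [Hi0 Hc0]].
  destruct (hA_nozero i0 Hi0) as [j0 [Hj0 _]].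
  assert (hn : (1 <= n)%nat) by lia.
  assert (hm : (1 <= m)%nat) by lia.
  pose proof (fmu_iter_x_nonpos m n A eps hA_nonneg hA_norm1 heps hn hm t i0 Hi0 Hc0)
    as Hnonpos.
  split.
  - intros k _. apply fmu_iter_x_succ_le; auto.
  - intros k _.
    assert (Hx : forall i, (i < n)%nat -> 0 <= iter_x m n A eps t k i)
      by (intros; apply Rlt_le, iter_x_pos; auto).
    pose proof (Ax_le_of_fmu_nonpos m n A eps hA_nonneg hA_norm1 heps hn hm _ Hx (Hnonpos k))
      as HAx.
    split; [|split]; auto.
    apply (sumx_le_of_Ax_le m n A); auto. lra.
Qed.
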